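(* Let $A=\{(x_k,y_k):k\in[\ell]\}\subset\mathbb N^d$ be finite, $d=m+n$. Then for all $\bar k\in[\ell]$: (a) $\mathbb D_{\mathrm{in}}(x_{\bar k},y_{\bar k},T_F(A))=\mathbb D_{\mathrm{in}}(x_{\bar k},y_{\bar k},Z_F(A))$; (b) $\mathbb D_{\mathrm{out}}(x_{\bar k},y_{\bar k},T_F(A))=\mathbb D_{\mathrm{out}}(x_{\bar k},y_{\bar k},Z_F(A))$.
   Context: $\mathbb N$ is the set of non-negative integers; $[\ell]=\{1,\dots,\ell\}$; $K=\mathbb{R}_+^m\times(-\mathbb{R}_+^n)$. FDH technology $T_F(A)=(A+K)\cap\mathbb{R}_+^d$ and its discrete version $Z_F(A)=(A+K)\cap\mathbb N^d$. Translation distance functions: $\mathbb D_{\mathrm{in}}(x,y,T)=\sup\{\delta\in\mathbb{R}:(x-\delta1\!\!1_m,y)\in T\}$, $\mathbb D_{\mathrm{out}}(x,y,T)=\sup\{\delta\in\mathbb{R}:(x,y+\delta1\!\!1_n)\in T\}$, where $1\!\!1$ denotes a vector of ones. *)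

From HB Require Import structures.
From mathcomp Require Import all_boot all_order all_algebra.
From mathcomp Require Import all_classical all_reals.
From mathcomp Require Import reals ereal.
Unset Printing Implicit Defensive.
Import Order.TTheory GRing.Theory Num.Theory.
Local Open Scope classical_set_scope.
Local Open Scope ring_scope.

(* A point of R^d, d = m + n, is a pair (x, y) with x : 'I_m -> R (inputs)
   and y : 'I_n -> R (outputs). *)
Definition pt (R : realType) (m n : nat) := (('I_m -> R) * ('I_n -> R))%type.

Definition isNat (R : realType) (r : R) : Prop := exists k : nat, r = k%:R.

(* A + K, with A = {(xs k, ys k) : k in 'I_l} and K = R_+^m x (-R_+^n) *)
Definition AplusK (R : realType) (m n l : nat)
  (xs : 'I_l -> 'I_m -> nat) (ys : 'I_l -> 'I_n -> nat) : set (pt R m n) :=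
  [set p | exists k : 'I_l, exists a : 'I_m -> R, exists b : 'I_n -> R,
     (forall i, 0 <= a i) /\ (forall j, 0 <= b j) /\
     (forall i, p.1 i = (xs k i)%:R + a i) /\
     (forall j, p.2 j = (ys k j)%:R - b j)].

Definition TF (R : realType) (m n l : nat)
  (xs : 'I_l -> 'I_m -> nat) (ys : 'I_l -> 'I_n -> nat) : set (pt R m n) :=
  AplusK R m n l xs ys `&`
  [set p : pt R m n | (forall i, 0 <= p.1 i) /\ (forall j, 0 <= p.2 j)].

Definition ZF (R : realType) (m n l : nat)
  (xs : 'I_l -> 'I_m -> nat) (ys : 'I_l -> 'I_n -> nat) : set (pt R m n) :=
  AplusK R m n l xs ys `&`
  [set p : pt R m n | (forall i, isNat R (p.1 i)) /\ (forall j, isNat R (p.2 j))].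

Definition Din (R : realType) (m n : nat) (x : 'I_m -> R) (y : 'I_n -> R)
  (T : set (pt R m n)) : \bar R :=
  ereal_sup [set (d%:E)%E | d in [set d : R | T ((fun i => x i - d), y)]].

Definition Dout (R : realType) (m n : nat) (x : 'I_m -> R) (y : 'I_n -> R)
  (T : set (pt R m n)) : \bar R :=
  ereal_sup [set (d%:E)%E | d in [set d : R | T (x, (fun j => y j + d))]].

(* For a point of A with integer coordinates, a
   feasible translation d stays feasible when rounded up to ceil d, because
   the slack between two integer coordinates is an integer; the rounded
   point is then integral, so the integer-feasible translations are cofinal
   among the real-feasible ones and both suprema coincide. *)

From HB Require Import structures.
From mathcomp Require Import all_boot all_order all_algebra.
From mathcomp Require Import all_classical all_reals.
From mathcomp Require Import ereal.
From mathcomp Require Import lra.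
Import Order.TTheory GRing.Theory Num.Theory.
Local Open Scope classical_set_scope.
Local Open Scope ring_scope.

Lemma ereal_sup_cofinal (R : realType) (S S' : set (\bar R)) :
  S `<=` S' -> (forall s, S' s -> exists2 t, S t & (s <= t)%E) ->
  ereal_sup S' = ereal_sup S.
Proof.
move=> sub_SS' cofinal; apply/le_anti/andP; split; last exact: ereal_sup_le.
apply: ge_ereal_sup => s /cofinal [t St le_st].
exact: le_trans le_st (ereal_sup_ubound St).
Qed.

Lemma ceil_le_natB (R : realType) (a b : nat) (d : R) :
  d <= a%:R - b%:R -> (Num.ceil d)%:~R <= a%:R - b%:R :> R.
Proof.
have -> : a%:R - b%:R = (a%:Z - b%:Z)%:~R :> R by rewrite rmorphB.
by rewrite ler_int ceil_le_int.
Qed.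

Lemma isNat_intr (R : realType) (z : int) : 0 <= z%:~R :> R -> isNat R z%:~R.
Proof. by rewrite ler0z; case: z => [k|k] //= _; exists k. Qed.

Lemma isNat_ge0 (R : realType) (r : R) : isNat R r -> 0 <= r.
Proof. by case=> k ->. Qed.

Section FreeDisposalHull.
Variables (R : realType) (m n l : nat).
Variables (xs : 'I_l -> 'I_m -> nat) (ys : 'I_l -> 'I_n -> nat).

Lemma AplusKP (p : pt R m n) :
  AplusK R m n l xs ys p <->
  exists k, (forall i, (xs k i)%:R <= p.1 i) /\ (forall j, p.2 j <= (ys k j)%:R).
Proof.
split=> [[k [a [b [a_ge0 [b_ge0 [p1E p2E]]]]]]|[k [xs_le le_ys]]].
  exists k; split=> [i|j]; [rewrite p1E lerDl | rewrite p2E lerBlDr lerDl] => //.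
exists k, (fun i => p.1 i - (xs k i)%:R), (fun j => (ys k j)%:R - p.2 j).
do 3?split=> [i|]; rewrite ?subr_ge0 //=; [lra|].
by move=> j; lra.
Qed.

Lemma ZF_sub_TF : ZF R m n l xs ys `<=` TF R m n l xs ys.
Proof.
by move=> p [Ap [p1N p2N]]; split=> //; split=> [i|j]; apply: isNat_ge0.
Qed.

Lemma AplusK_in_ceil (x0 : 'I_m -> nat) (y0 : 'I_n -> nat) (d : R) :
  AplusK R m n l xs ys (fun i => (x0 i)%:R - d, fun j => (y0 j)%:R) ->
  ZF R m n l xs ys (fun i => (x0 i)%:R - (Num.ceil d)%:~R, fun j => (y0 j)%:R).
Proof.
case/AplusKP=> k [/= xs_le le_ys].
have xs_le_ceil i : (xs k i)%:R <= (x0 i)%:R - (Num.ceil d)%:~R :> R.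
  have /ceil_le_natB : d <= (x0 i)%:R - (xs k i)%:R by have := xs_le i; lra.
  lra.
split; first by apply/AplusKP; exists k.
split=> [i|j] /=; last by exists (y0 j).
have -> : (x0 i)%:R - (Num.ceil d)%:~R = ((x0 i)%:Z - Num.ceil d)%:~R :> R.
  by rewrite rmorphB.
by apply: isNat_intr; rewrite rmorphB; apply: le_trans (xs_le_ceil i).
Qed.

Lemma AplusK_out_ceil (x0 : 'I_m -> nat) (y0 : 'I_n -> nat) (d : R) :
  AplusK R m n l xs ys (fun i => (x0 i)%:R, fun j => (y0 j)%:R + d) ->
  (forall j, 0 <= (y0 j)%:R + d) ->
  ZF R m n l xs ys (fun i => (x0 i)%:R, fun j => (y0 j)%:R + (Num.ceil d)%:~R).
Proof.
case/AplusKP=> k [/= xs_le le_ys] out_ge0.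
have le_ys_ceil j : (y0 j)%:R + (Num.ceil d)%:~R <= (ys k j)%:R :> R.
  have /ceil_le_natB : d <= (ys k j)%:R - (y0 j)%:R by have := le_ys j; lra.
  lra.
split; first by apply/AplusKP; exists k.
split=> [i|j] /=; first by exists (x0 i).
have -> : (y0 j)%:R + (Num.ceil d)%:~R = ((y0 j)%:Z + Num.ceil d)%:~R :> R.
  by rewrite rmorphD.
apply: isNat_intr; rewrite rmorphD /=.
by have := out_ge0 j; have := ceil_ge d; lra.
Qed.

End FreeDisposalHull.

Theorem mainTheorem10 (R : realType) (m n l : nat)
  (xs : 'I_l -> 'I_m -> nat) (ys : 'I_l -> 'I_n -> nat) (kb : 'I_l) :
  let x := fun i => ((xs kb i)%:R : R) in
  let y := fun j => ((ys kb j)%:R : R) in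
  Din R m n x y (TF R m n l xs ys) = Din R m n x y (ZF R m n l xs ys) /\
  Dout R m n x y (TF R m n l xs ys) = Dout R m n x y (ZF R m n l xs ys).
Proof.
move=> x y; split; apply: ereal_sup_cofinal.
- by apply: image_subset => d /ZF_sub_TF.
- move=> _ [d [/AplusK_in_ceil ZF_ceil _] <-].
  exists (Num.ceil d)%:~R%:E; last by rewrite lee_fin ceil_ge.
  by exists (Num.ceil d)%:~R.
- by apply: image_subset => d /ZF_sub_TF.
- move=> _ [d [/AplusK_out_ceil ZF_ceil [_ out_ge0]] <-].
  exists (Num.ceil d)%:~R%:E; last by rewrite lee_fin ceil_ge.
  by exists (Num.ceil d)%:~R => //; apply: ZF_ceil.
Qed.
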